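(* Let $\mathbb{X}$ be a reverse differential restriction category. For any parallel maps $f,g:A\to B$, if $f\le g$ then $R[f]\le R[g]$. Moreover, if $\mathbb{X}$ is a join restriction category, then for every pairwise compatible family $\{f_i\}$ of maps $A\to B$ we have $R[\bigvee_i f_i]=\bigvee_i R[f_i]$.
   Context: Composition is written in diagrammatic order: $fg$ means ''first $f$, then $g$''. A restriction category is a category with an operation sending each $f:A\to B$ to a map $\bar f:A\to A$ such that $\bar f f=f$, $\bar f\bar g=\bar g\bar f$ (for $f,g$ with common domain), $\overline{\bar f g}=\bar f\bar g$, and $f\bar g=\overline{fg}\,f$. A map $f$ is total if $\bar f=1$. For parallel maps: - $f\le g$ means $\bar f g=f$; - $f,g$ are compatible if $\bar f g=\bar g f$; - the join $\bigvee_i f_i$ of a family is its least upper bound for $\le$. A join restriction category is a restriction category in which every family of pairwise compatible parallel maps (including the empty family) has a join, and composition preserves joins on both sides: $h(\bigvee_i f_i)=\bigvee_i hf_i$ and $(\bigvee_i f_i)k=\bigvee_i f_ik$. The category has restriction products if: - there is an object $1$ with a total map $!_A:A\to 1$ for each $A$ such that every $f:A\to 1$ equals $\bar f\,!_A$; - for all $A,B$ there is an object $A\times B$ with total maps $\pi_0,\pi_1$ such that for all $f:C\to A$, $g:C\to B$ there is a unique $\langle f,g\rangle:C\to A\times B$ with $\langle f,g\rangle\pi_0=\bar g f$ and $\langle f,g\rangle\pi_1=\bar f g$. Write $f\times g=\langle \pi_0 f,\pi_1 g\rangle$. A Cartesian left additive restriction category is a restriction category with restriction products in which every hom-set is a commutative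 monoid $(+,0)$ such that: - $\overline{f+g}=\bar f\bar g$ and $\bar 0=1$; - $x(f+g)=xf+xg$ and $x0=\bar x 0$; - $(f+g)\pi_i=f\pi_i+g\pi_i$ and $0\pi_i=0$. Write $\iota_0=\langle 1,0\rangle:A\to A\times B$ and $\iota_1=\langle 0,1\rangle:B\to A\times B$. A reverse differential restriction category (RDRC) is a Cartesian left additive restriction category with an operation sending each $f:A\to B$ to $R[f]:A\times B\to A$ such that: - [RD.1] $R[f+g]=R[f]+R[g]$ and $R[0]=0$. - [RD.2] $\langle a,b+c\rangle R[f]=\langle a,b\rangle R[f]+\langle a,c\rangle R[f]$ and $\langle a,0\rangle R[f]=\overline{af}\,0$. - [RD.3] $R[\pi_j]=\pi_1\iota_j$. - [RD.4] $R[\langle f,g\rangle]=(1\times\pi_0)R[f]+(1\times\pi_1)R[g]$. - [RD.5] $R[fg]=\langle \pi_0,\langle\pi_0 f,\pi_1\rangle R[g]\rangle R[f]$. - [RD.6] $\langle 1\times\pi_0,\,0\times\pi_1\rangle(\iota_0\times 1)R[R[R[f]]]\pi_1=(1\times\pi_1)R[f]$. - [RD.7] With $g:=(\iota_0\times 1)R[R[f]]\pi_1$, one has $(\iota_0\times1)R[R[g]]\pi_1=\mathrm{ex}\,(\iota_0\times 1)R[R[g]]\pi_1$, where $\mathrm{ex}=\langle\pi_0\times\pi_0,\pi_1\times\pi_1\rangle$. - [RD.8] $\overline{R[f]}=\bar f\times 1$. - [RD.9] $R[\bar f]=(\bar f\times 1)\pi_1$. *)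

(* Composition is written
   in diagrammatic order: [comp f g] is "first f, then g". *)

Set Implicit Arguments.
Unset Strict Implicit.

Record CLARC := {
  ob : Type;
  hom : ob -> ob -> Type;
  idm : forall A, hom A A;
  comp : forall {A B C}, hom A B -> hom B C -> hom A C;
  comp_id_l : forall A B (f : hom A B), comp (idm A) f = f;
  comp_id_r : forall A B (f : hom A B), comp f (idm B) = f;
  comp_assoc : forall A B C D (f : hom A B) (g : hom B C) (h : hom C D),
      comp (comp f g) h = comp f (comp g h);

  rst : forall {A B}, hom A B -> hom A A;
  R1 : forall A B (f : hom A B), comp (rst f) f = f;
  R2 : forall A B C (f : hom A B) (g : hom A C),
      comp (rst f) (rst g) = comp (rst g) (rst f);
  R3 : forall A B C (f : hom A B) (g : hom A C),
      rst (comp (rst f) g) = comp (rst f) (rst g);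
  R4 : forall A B C (f : hom A B) (g : hom B C),
      comp f (rst g) = comp (rst (comp f g)) f;

  term : ob;
  bang : forall A, hom A term;
  bang_total : forall A, rst (bang A) = idm A;
  bang_univ : forall A (f : hom A term), f = comp (rst f) (bang A);

  prod : ob -> ob -> ob;
  pi0 : forall {A B}, hom (prod A B) A;
  pi1 : forall {A B}, hom (prod A B) B;
  pi0_total : forall A B, rst (@pi0 A B) = idm (prod A B);
  pi1_total : forall A B, rst (@pi1 A B) = idm (prod A B);
  pair : forall {C A B}, hom C A -> hom C B -> hom C (prod A B);
  pair_pi0 : forall C A B (f : hom C A) (g : hom C B),
      comp (pair f g) pi0 = comp (rst g) f;
  pair_pi1 : forall C A B (f : hom C A) (g : hom C B),
      comp (pair f g) pi1 = comp (rst f) g;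
  pair_uniq : forall C A B (f : hom C A) (g : hom C B) (h : hom C (prod A B)),
      comp h pi0 = comp (rst g) f -> comp h pi1 = comp (rst f) g ->
      h = pair f g;

  plus : forall {A B}, hom A B -> hom A B -> hom A B;
  zero : forall A B, hom A B;
  plus_comm : forall A B (f g : hom A B), plus f g = plus g f;
  plus_assoc : forall A B (f g h : hom A B),
      plus (plus f g) h = plus f (plus g h);
  plus_zero : forall A B (f : hom A B), plus f (zero A B) = f;
  rst_plus : forall A B (f g : hom A B), rst (plus f g) = comp (rst f) (rst g);
  rst_zero : forall A B, rst (zero A B) = idm A;
  comp_plus : forall C A B (x : hom C A) (f g : hom A B),
      comp x (plus f g) = plus (comp x f) (comp x g);
  comp_zero : forall C A B (x : hom C A), comp x (zero A B) = comp (rst x) (zero C B);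
  plus_pi0 : forall C A B (f g : hom C (prod A B)),
      comp (plus f g) pi0 = plus (comp f pi0) (comp g pi0);
  plus_pi1 : forall C A B (f g : hom C (prod A B)),
      comp (plus f g) pi1 = plus (comp f pi1) (comp g pi1);
  zero_pi0 : forall C A B, comp (zero C (prod A B)) pi0 = zero C A;
  zero_pi1 : forall C A B, comp (zero C (prod A B)) pi1 = zero C B
}.

Arguments hom : clear implicits.
Arguments idm {X} A : rename.
Arguments comp {X A B C} f g : rename.
Arguments rst {X A B} f : rename.
Arguments bang {X} A : rename.
Arguments prod {X} A B : rename.
Arguments pi0 {X A B} : rename.
Arguments pi1 {X A B} : rename.
Arguments pair {X C A B} f g : rename.
Arguments plus {X A B} f g : rename.
Arguments zero {X} A B : rename.

Section Derived.
Variable X : CLARC.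

Definition tms {A B C D} (f : hom X A C) (g : hom X B D)
  : hom X (prod A B) (prod C D) := pair (comp pi0 f) (comp pi1 g).

Definition iota0 (A B : ob X) : hom X A (prod A B) := pair (idm A) (zero A B).
Definition iota1 (A B : ob X) : hom X B (prod A B) := pair (zero B A) (idm B).

Definition ex (A B C D : ob X)
  : hom X (prod (prod A B) (prod C D)) (prod (prod A C) (prod B D)) :=
  pair (tms (@pi0 X A B) (@pi0 X C D)) (tms (@pi1 X A B) (@pi1 X C D)).

Definition rle {A B} (f g : hom X A B) : Prop := comp (rst f) g = f.

Definition compatible {A B} (f g : hom X A B) : Prop :=
  comp (rst f) g = comp (rst g) f.

Definition pairwise_compatible {A B} {I : Type} (f : I -> hom X A B) : Prop :=
  forall i j, compatible (f i) (f j).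

Definition is_join {A B} {I : Type} (f : I -> hom X A B) (j : hom X A B) : Prop :=
  (forall i, rle (f i) j) /\ (forall k, (forall i, rle (f i) k) -> rle j k).

Definition join_restriction : Prop :=
  (forall A B (I : Type) (f : I -> hom X A B),
      pairwise_compatible f -> exists j, is_join f j) /\
  (forall C A B (I : Type) (f : I -> hom X A B) (j : hom X A B) (h : hom X C A),
      pairwise_compatible f -> is_join f j ->
      is_join (fun i => comp h (f i)) (comp h j)) /\
  (forall A B D (I : Type) (f : I -> hom X A B) (j : hom X A B) (k : hom X B D),
      pairwise_compatible f -> is_join f j ->
      is_join (fun i => comp (f i) k) (comp j k)).

End Derived.

Arguments tms {X A B C D} f g.
Arguments iota0 {X} A B.
Arguments iota1 {X} A B.
Arguments ex {X} A B C D.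
Arguments rle {X A B} f g.
Arguments compatible {X A B} f g.
Arguments pairwise_compatible {X A B I} f.
Arguments is_join {X A B I} f j.
Arguments join_restriction X : assert.

Record RDRC := {
  clarc :> CLARC;
  Rd : forall {A B : ob clarc}, hom clarc A B -> hom clarc (prod A B) A;
  RD1_plus : forall A B (f g : hom clarc A B), Rd (plus f g) = plus (Rd f) (Rd g);
  RD1_zero : forall A B, Rd (zero A B) = zero (prod A B) A;
  RD2_plus : forall C A B (f : hom clarc A B) (a : hom clarc C A) (b c : hom clarc C B),
      comp (pair a (plus b c)) (Rd f) =
      plus (comp (pair a b) (Rd f)) (comp (pair a c) (Rd f));
  RD2_zero : forall C A B (f : hom clarc A B) (a : hom clarc C A),
      comp (pair a (zero C B)) (Rd f) = comp (rst (comp a f)) (zero C A);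
  RD3_0 : forall A B : ob clarc,
      Rd (@pi0 clarc A B) = comp pi1 (iota0 A B);
  RD3_1 : forall A B : ob clarc,
      Rd (@pi1 clarc A B) = comp pi1 (iota1 A B);
  RD4 : forall C A B (f : hom clarc C A) (g : hom clarc C B),
      Rd (pair f g) =
      plus (comp (tms (idm C) pi0) (Rd f)) (comp (tms (idm C) pi1) (Rd g));
  RD5 : forall A B C (f : hom clarc A B) (g : hom clarc B C),
      Rd (comp f g) = comp (pair pi0 (comp (pair (comp pi0 f) pi1) (Rd g))) (Rd f);
  RD6 : forall A B (f : hom clarc A B),
      comp (pair (tms (idm A) (@pi0 clarc B B)) (tms (zero A A) (@pi1 clarc B B)))
        (comp (comp (tms (iota0 (prod A B) A) (idm (prod A B))) (Rd (Rd (Rd f)))) pi1)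
      = comp (tms (idm A) (@pi1 clarc B B)) (Rd f);
  RD7 : forall A B (f : hom clarc A B),
      let g := comp (comp (tms (iota0 A B) (idm A)) (Rd (Rd f))) pi1 in
      comp (comp (tms (iota0 (prod A A) B) (idm (prod A A))) (Rd (Rd g))) pi1 =
      comp (ex A A A A)
        (comp (comp (tms (iota0 (prod A A) B) (idm (prod A A))) (Rd (Rd g))) pi1);
  RD8 : forall A B (f : hom clarc A B), rst (Rd f) = tms (rst f) (idm B);
  RD9 : forall A B (f : hom clarc A B),
      Rd (rst f) = comp (tms (rst f) (idm A)) pi1
}.

Arguments Rd {X A B} f : rename.


Set Implicit Arguments.
Unset Strict Implicit.

(* Everything rests on one computation (Rd_restrict): precomposing a map with
   a restriction idempotent  e = rst h  pulls out of the reverse derivative as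
   the restriction idempotent  e x 1  of  A x B:  R[e g] = (e x 1) R[g].
   It follows from [RD.5] and [RD.9] using only restriction calculus.
   If  f <= g  then  f = rst f ; g, hence  R[f] = (rst f x 1) R[g]
   (Rd_below), and by [RD.8]  rst f x 1 = rst R[f], which is monotonicity.
   For a compatible family  f_i  with join  j,  every  f_i <= j,  so
   R[f_i] = (rst f_i x 1) R[j].  In a join restriction category restriction
   preserves joins (join_rst), hence the idempotents  rst f_i x 1  have join
   rst j x 1 (join_tms_rst_comp, which also composes with R[j] on the right),
   and  (rst j x 1) R[j] = R[j]  by [RD.8]. *)

Section RestrictionCalculus.
Variable X : CLARC.

Lemma rst_idm (A : ob X) : rst (idm A) = idm A.
Proof. pose proof (R1 (idm A)) as H. rewrite comp_id_r in H. exact H. Qed.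

Lemma rst_rst (A B : ob X) (f : hom X A B) : rst (rst f) = rst f.
Proof. pose proof (R3 f (idm A)) as H. rewrite comp_id_r, rst_idm, comp_id_r in H. exact H. Qed.

Lemma rst_idem (A B : ob X) (f : hom X A B) : comp (rst f) (rst f) = rst f.
Proof. pose proof (R1 (rst f)) as H. rewrite rst_rst in H. exact H. Qed.

Lemma rle_antisym (A B : ob X) (a b : hom X A B) : rle a b -> rle b a -> a = b.
Proof.
  unfold rle. intros Hab Hba.
  assert (Hrst : rst a = rst b).
  { assert (Ha : rst a = comp (rst a) (rst b)) by (rewrite <- R3, Hab; reflexivity).
    assert (Hb : rst b = comp (rst b) (rst a)) by (rewrite <- R3, Hba; reflexivity).
    rewrite Ha, R2, <- Hb. reflexivity. }
  rewrite <- Hab, Hrst. apply R1.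
Qed.

Lemma tms_rst_idm (A B C : ob X) (h : hom X A C) :
  tms (rst h) (idm B) = rst (comp (@pi0 X A B) (rst h)).
Proof.
  symmetry. unfold tms. apply pair_uniq.
  - rewrite comp_id_r, pi1_total, comp_id_l, <- R4, rst_rst. reflexivity.
  - rewrite comp_id_r. reflexivity.
Qed.

End RestrictionCalculus.

Section Joins.
Variable X : CLARC.

Lemma is_join_ext (A B : ob X) (I : Type) (f f' : I -> hom X A B) (j : hom X A B) :
  (forall i, f i = f' i) -> is_join f j -> is_join f' j.
Proof.
  intros Hext [Hub Hleast]. split.
  - intro i. rewrite <- Hext. apply Hub.
  - intros k Hk. apply Hleast. intro i. rewrite Hext. apply Hk.
Qed.

Lemma is_join_unique (A B : ob X) (I : Type) (f : I -> hom X A B) (j j' : hom X A B) :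
  is_join f j -> is_join f j' -> j = j'.
Proof.
  intros [Hub Hleast] [Hub' Hleast'].
  apply rle_antisym; [apply Hleast; exact Hub' | apply Hleast'; exact Hub].
Qed.

Lemma compatible_comp_l (C A B : ob X) (I : Type) (h : hom X C A) (f : I -> hom X A B) :
  pairwise_compatible f -> pairwise_compatible (fun i => comp h (f i)).
Proof.
  intros Hf i i'. unfold compatible.
  rewrite <- !comp_assoc, <- !R4, !comp_assoc. f_equal. apply Hf.
Qed.

Lemma compatible_rst (A B : ob X) (I : Type) (f : I -> hom X A B) :
  pairwise_compatible (fun i => rst (f i)).
Proof. intros i i'. unfold compatible. rewrite !rst_rst. apply R2. Qed.

Variable JR : join_restriction X.

(* The join  J  of the
   idempotents  rst g_i  lies below the identity, so it is itself a
   restriction idempotent, and  J ; j = \/ rst g_i ; j = \/ g_i = j. *)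
Lemma join_rst (A B : ob X) (I : Type) (g : I -> hom X A B) (j : hom X A B) :
  pairwise_compatible g -> is_join g j -> is_join (fun i => rst (g i)) (rst j).
Proof.
  destruct JR as [join_exists [_ join_comp_r]].
  intros Hc Hj. split.
  - intro i. unfold rle. rewrite rst_rst, <- R3. f_equal. apply (proj1 Hj).
  - intros k Hk.
    destruct (join_exists _ _ _ _ (compatible_rst g)) as [J HJ].
    assert (HJ_idem : rst J = J).
    { pose proof (proj2 HJ (idm A)) as H. unfold rle in H.
      rewrite comp_id_r in H. apply H. intro i. rewrite comp_id_r. apply rst_rst. }
    assert (HJ_j : comp J j = j).
    { apply (is_join_unique (f := g)); [|exact Hj].
      apply (is_join_ext (f := fun i => comp (rst (g i)) j)).
      - intro i. apply (proj1 Hj).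
      - exact (join_comp_r _ _ _ _ _ _ j (compatible_rst g) HJ). }
    assert (HJ_k : comp J k = J).
    { pose proof (proj2 HJ k Hk) as H. unfold rle in H. rewrite HJ_idem in H. exact H. }
    assert (Hrst_j : comp J (rst j) = rst j).
    { rewrite <- HJ_idem, <- R3, HJ_idem, HJ_j. reflexivity. }
    unfold rle. rewrite rst_rst, <- Hrst_j, <- HJ_idem, R2, comp_assoc,
      HJ_idem, HJ_k, <- HJ_idem, R2. reflexivity.
Qed.

Lemma join_tms_rst_comp (A B C D : ob X) (I : Type) (f : I -> hom X A B)
    (j : hom X A B) (k : hom X (prod A C) D) :
  pairwise_compatible f -> is_join f j ->
  is_join (fun i => comp (tms (rst (f i)) (idm C)) k) (comp (tms (rst j) (idm C)) k).
Proof.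
  destruct JR as [_ [join_comp_l join_comp_r]].
  intros Hc Hj.
  pose (pi0_rst := fun i => comp (@pi0 X A C) (rst (f i))).
  assert (Hpi0 : is_join pi0_rst (comp pi0 (rst j))).
  { exact (join_comp_l _ _ _ _ _ _ pi0 (compatible_rst f) (join_rst Hc Hj)). }
  assert (Hcpi0 : pairwise_compatible pi0_rst).
  { exact (compatible_comp_l pi0 (compatible_rst f)). }
  rewrite tms_rst_idm.
  apply (is_join_ext (f := fun i => comp (rst (pi0_rst i)) k)).
  - intro i. unfold pi0_rst. rewrite tms_rst_idm. reflexivity.
  - exact (join_comp_r _ _ _ _ _ _ k (compatible_rst pi0_rst) (join_rst Hcpi0 Hpi0)).
Qed.

End Joins.

Section ReverseDerivative.
Variable X : RDRC.

(* With  E = rst h x 1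
   on  A x B  and  c = E ; R[g],  axioms [RD.5] and [RD.9] turn the left side
   into  <pi0, c> ; (rst h x 1) ; pi1  (the idempotent now living on A x A);
   moving that idempotent past  <pi0, c>  gives  rst c ; E ; c = c. *)
Lemma Rd_restrict (A B C : ob X) (h : hom X A C) (g : hom X A B) :
  Rd (comp (rst h) g) = comp (tms (rst h) (idm B)) (Rd g).
Proof.
  set (E := tms (rst h) (idm B)).
  set (c := comp E (Rd g)).
  assert (HE_pair : pair (comp pi0 (rst h)) pi1 = E).
  { unfold E, tms. rewrite comp_id_r. reflexivity. }
  assert (HRd_e : Rd (rst h) = comp (rst (comp (@pi0 X A A) (rst h))) pi1).
  { rewrite RD9, tms_rst_idm. reflexivity. }
  assert (HE : E = rst (comp pi0 (rst h))) by apply tms_rst_idm.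
  assert (HEc : comp E c = c).
  { unfold c. rewrite <- comp_assoc, HE, rst_idem. reflexivity. }
  rewrite RD5, HE_pair, HRd_e. fold c.
  rewrite <- comp_assoc, R4, comp_assoc, pair_pi1, pi0_total, comp_id_l,
    <- comp_assoc, pair_pi0, comp_assoc, R3, <- HE, comp_assoc, HEc, R1.
  reflexivity.
Qed.

Lemma Rd_below (A B : ob X) (f g : hom X A B) :
  rle f g -> Rd f = comp (tms (rst f) (idm B)) (Rd g).
Proof. unfold rle. intro Hfg. rewrite <- Rd_restrict, Hfg. reflexivity. Qed.

End ReverseDerivative.

Theorem mainTheorem2 (X : RDRC) :
  (forall (A B : ob X) (f g : hom X A B), rle f g -> rle (Rd f) (Rd g)) /\
  (join_restriction X ->
   forall (A B : ob X) (I : Type) (f : I -> hom X A B) (j : hom X A B),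
     pairwise_compatible f -> is_join f j ->
     is_join (fun i => Rd (f i)) (Rd j)).
Proof.
  split.
  - intros A B f g Hfg. unfold rle. rewrite RD8. symmetry. exact (Rd_below Hfg).
  - intros JR A B I f j Hc Hj.
    assert (HRd_j : comp (tms (rst j) (idm B)) (Rd j) = Rd j).
    { rewrite <- RD8. apply R1. }
    rewrite <- HRd_j.
    apply (is_join_ext (f := fun i => comp (tms (rst (f i)) (idm B)) (Rd j))).
    + intro i. symmetry. apply Rd_below. apply (proj1 Hj).
    + exact (join_tms_rst_comp JR (Rd j) Hc Hj).
Qed.
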